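(* Let $\mathbb{P} = \mathbb{P}(1,1,2,5)$, let $H$ be the group of degree-preserving $\mathbb{C}$-algebra automorphisms of the graded ring $\mathbb{C}[x,y,z,w]$ (with $\deg x=\deg y=1$, $\deg z=2$, $\deg w=5$), so that $\mathrm{Aut}(\mathbb{P}) \cong H/\mathbb{C}^*$, where $\lambda \in \mathbb{C}^*$ acts by $(x,y,z,w)\mapsto(\lambda x,\lambda y,\lambda^2 z,\lambda^5 w)$. Let $G \leq \mathrm{Aut}(\mathbb{P})$ be a finite subgroup. Then for every $\psi \in G$ and every $\phi \in H$ mapping to $\psi$, one has \[ \phi(w) = \alpha w,\quad \phi(z) = \beta z,\quad \phi(x) = ax+cy,\quad \phi(y) = bx+dy \] for some $\alpha,\beta \in \mathbb{C}^*$ and some matrix $A = \begin{pmatrix} a & b\\ c & d\end{pmatrix} \in GL_2(\mathbb{C})$ which is diagonalizable. *)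

From HB Require Import structures.
From mathcomp Require Import all_boot all_algebra.
From mathcomp Require Import Rstruct.
From mathcomp Require Import complex.
From mathcomp Require Import mpoly.
Set Implicit Arguments. Unset Strict Implicit. Unset Printing Implicit Defensive.
Import GRing.Theory Num.Theory.
Local Open Scope ring_scope.

Definition C : numClosedFieldType := (Rdefinitions.R)[i].

(* The polynomial ring C[x,y,z,w] = C['X_0,'X_1,'X_2,'X_3]. *)
Definition Pol := {mpoly C[4]}.

Definition wt (i : 'I_4) : nat :=
  match val i with 0 => 1 | 1 => 1 | 2 => 2 | _ => 5 end%N.

Definition wdeg (m : 'X_{1..4}) : nat := (\sum_(i < 4) wt i * m i)%N.

(* p is homogeneous of weighted degree d (0 is homogeneous of every degree) *)
Definition whomog (d : nat) (p : Pol) : Prop :=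
  forall m, m \in msupp p -> wdeg m = d.

Definition is_Calg_morph (f : Pol -> Pol) : Prop :=
  [/\ forall (a : C) (p q : Pol), f (a *: p + q) = a *: f p + f q,
      forall p q : Pol, f (p * q) = f p * f q
    & f 1 = 1].

Definition inH (f : Pol -> Pol) : Prop :=
  [/\ is_Calg_morph f, bijective f
    & forall (d : nat) (p : Pol), whomog d p -> whomog d (f p)].

Definition lam_act (l : C) : Pol -> Pol :=
  comp_mpoly [tuple l *: 'X_0; l *: 'X_1; l ^+ 2 *: 'X_2; l ^+ 5 *: 'X_3].

(* A finite subgroup G of Aut(P) = H / C^* is encoded by its preimage
   Ghat in H: a subgroup of H containing C^* with finitely many cosets
   modulo C^*. *)
Definition finite_subgroup_mod_Cstar (Ghat : (Pol -> Pol) -> Prop) : Prop :=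
  [/\ forall f, Ghat f -> inH f,
      forall f g, Ghat f -> Ghat g -> Ghat (f \o g),
      forall f g, Ghat f -> cancel f g -> cancel g f -> Ghat g,
      forall l : C, l != 0 -> Ghat (lam_act l)
    & exists (n : nat) (g : 'I_n -> Pol -> Pol),
        (forall i, Ghat (g i)) /\
        forall f, Ghat f -> exists i (l : C), l != 0 /\ f = g i \o lam_act l].

From HB Require Import structures.
From mathcomp Require Import all_boot all_algebra.
From mathcomp Require Import Rstruct complex mpoly separable.
From mathcomp Require Import zify ring.
Import GRing.Theory Num.Theory.
Set Implicit Arguments. Unset Strict Implicit. Unset Printing Implicit Defensive.
Local Open Scope ring_scope.

(* An element f of H is the substitution by the images f(x), f(y), f(z), f(w),
   which are weighted homogeneous of degrees 1, 1, 2, 5.  The only monomial of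
   degree 2 (resp. 5) containing z (resp. w) is z (resp. w) itself, and no other
   variable has that weight; hence the coefficient of z in f(z) (resp. of w in
   f(w)) is multiplicative in f, a character chi of the lifted group.  Averaging
   the normalized images g(z) / chi(g) over representatives g of the finitely
   many cosets modulo C^* gives a common eigenvector z' = z + q(x, y), and
   likewise w' = w + r(x, y, z); the substitution (x, y, z', w') is a graded
   automorphism.  On the degree-one part, finiteness modulo C^* makes some power
   of phi a scalar l != 0, so its matrix A satisfies A^d = l: A is invertible,
   and diagonalizable since X^d - l is separable. *)

Lemma sumr_self_inj (V : nmodType) (s : seq V) (f : V -> V) :
  uniq s -> {in s &, injective f} -> {in s, forall x, f x \in s} ->
  \sum_(x <- s) f x = \sum_(x <- s) x.
Proof.
move=> s_uniq f_inj f_s; rewrite -[LHS](big_map f xpredT id); apply: perm_big.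
have fs_uniq : uniq (map f s) by rewrite map_inj_in_uniq.
have fs_sub : {subset map f s <= s} by move=> _ /mapP[x xs ->]; apply: f_s.
have [|_ fs_eq] := uniq_min_size fs_uniq fs_sub; first by rewrite size_map.
exact: uniq_perm.
Qed.

Lemma pow_scalar_unitmx (F : fieldType) n d (A : 'M[F]_n) (l : F) :
  (0 < d)%N -> l != 0 -> A ^+ d = l%:M -> A \in unitmx.
Proof.
move=> d_gt0 l_neq0 A_pow.
have AB : A *m (l^-1 *: A ^+ d.-1) = 1%:M.
  by rewrite -scalemxAr -[A *m _]/(A * _) -exprS prednK // A_pow scale_scalar_mx mulVf.
by case: (mulmx1_unit AB).
Qed.

Lemma pow_scalar_diagonalizable (F : closedFieldType) n d (A : 'M[F]_n.+1) (l : F) :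
  d%:R != 0 :> F -> l != 0 -> A ^+ d = l%:M -> diagonalizable A.
Proof.
move=> d_neq0 l_neq0 A_pow; pose p : {poly F} := 'X^d - l%:P.
have d_gt0 : (0 < d)%N by rewrite lt0n; apply: contra d_neq0 => /eqP ->.
have [rs p_split] := closed_field_poly_normal p.
rewrite lead_coefXnsubC // scale1r in p_split.
have p_sep : separable_poly p.
  rewrite unlock /p derivB derivXn derivC subr0 -scaler_nat coprimepZr //.
  apply: coprimep_expr; rewrite coprimepX rootE !hornerE expr0n gtn_eqF //=.
  by rewrite sub0r oppr_eq0.
apply/diagonalizableP; exists rs; first by rewrite -separable_prod_XsubC -p_split.
rewrite -p_split; apply: mxminpoly_min.
by rewrite /p rmorphB /= rmorphXn /= horner_mx_X horner_mx_C A_pow subrr.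
Qed.

Lemma mnm_neq0_ex n (m : 'X_{1..n}) : m != 0%MM -> exists i, m i != 0%N.
Proof.
move=> m_neq0; case: (pickP (fun i => m i != 0%N)) => [i|m0]; first by exists i.
suff m_eq0 : m = 0%MM by rewrite m_eq0 eqxx in m_neq0.
by apply/mnmP => i; rewrite mnm0E; apply/eqP/negbFE/m0.
Qed.

Lemma mcoeffMU_eq0 n (R : comNzRingType) k (q r : {mpoly R[n]}) :
  q@_0 = 0 -> q@_U_(k) = 0 -> (q * r)@_U_(k) = 0.
Proof.
have coefU (p : {mpoly R[n]}) : p@_U_(k) = (p^`M(k))@_0.
  by rewrite mcoeff_mderiv mnm0E add0m.
move=> q0 qk; rewrite coefU mderivM mcoeffD !(mcoeff0_is_multiplicative _ _).1 -coefU.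
by rewrite q0 qk !mul0r addr0.
Qed.

Section Substitution.
Variables (n k : nat) (R : comNzRingType).
Implicit Types (p q : {mpoly R[n]}).

Lemma comp_mpoly_eq_on p (t t' : n.-tuple {mpoly R[k]}) :
  (forall m i, m \in msupp p -> m i != 0%N -> tnth t i = tnth t' i) ->
  p \mPo t = p \mPo t'.
Proof.
move=> tt'; rewrite !comp_mpolyE !big_seq; apply: eq_bigr => m mp.
congr (_ *: _); apply: eq_bigr => i _.
by have [->|mi] := eqVneq (m i) 0%N; rewrite ?expr0 ?(tt' m i mp mi).
Qed.

Lemma comp_mpoly_comp p (t : n.-tuple {mpoly R[n]}) (t' : n.-tuple {mpoly R[k]}) :
  (p \mPo t) \mPo t' = p \mPo [tuple tnth t i \mPo t' | i < n].
Proof.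
rewrite [p \mPo t]comp_mpolyEX [RHS]comp_mpolyEX raddf_sum /=; apply: eq_bigr => m _.
rewrite comp_mpolyZ !comp_mpolyX rmorph_prod; congr (_ *: _).
by apply: eq_bigr => i _; rewrite rmorphXn tnth_mktuple.
Qed.

End Substitution.

Section Elementary.
Variables (n : nat) (R : comNzRingType).
Implicit Types (p q : {mpoly R[n]}).

Definition mfree_of (k : 'I_n) p := forall m, m \in msupp p -> m k = 0%N.

Definition elementary (k : 'I_n) q : n.-tuple {mpoly R[n]} :=
  [tuple if i == k then 'X_i + q else 'X_i | i < n].

Lemma comp_elementaryX k q i :
  'X_i \mPo elementary k q = if i == k then 'X_i + q else 'X_i.
Proof. by rewrite comp_mpolyXU -tnth_nth tnth_mktuple. Qed.

Lemma comp_elementary_free k q p : mfree_of k p -> p \mPo elementary k q = p.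
Proof.
move=> p_free; rewrite -[RHS]comp_mpoly_id; apply: comp_mpoly_eq_on => m i mp.
by rewrite !tnth_mktuple; have [->|] := eqVneq i k; rewrite ?p_free.
Qed.

Lemma elementaryK k q : mfree_of k q ->
  cancel (comp_mpoly (elementary k q)) (comp_mpoly (elementary k (- q))).
Proof.
move=> q_free p; rewrite comp_mpoly_comp -[RHS]comp_mpoly_id; congr comp_mpoly.
apply: eq_mktuple => i; rewrite tnth_mktuple.
have [->|ik] := eqVneq i k; last by rewrite comp_elementaryX (negbTE ik).
by rewrite comp_mpolyD comp_elementaryX eqxx comp_elementary_free // addrNK.
Qed.

Lemma elementary_bij k q : mfree_of k q -> bijective (comp_mpoly (elementary k q)).
Proof.
move=> q_free; have Nq_free : mfree_of k (- q).
  by move=> m; rewrite (perm_mem (msuppN q)); apply: q_free.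
by exists (comp_mpoly (elementary k (- q))); [|rewrite -{2}[q]opprK]; apply: elementaryK.
Qed.

End Elementary.

Section CalgMorphism.
Variable f : Pol -> Pol.
Hypothesis f_morph : is_Calg_morph f.

Lemma Calg_morphD p q : f (p + q) = f p + f q.
Proof. by case: f_morph => f_lin _ _; rewrite -[p]scale1r f_lin !scale1r. Qed.

Lemma Calg_morph0 : f 0 = 0.
Proof. by apply: (addrI (f 0)); rewrite -Calg_morphD !addr0. Qed.

Lemma Calg_morphZ a p : f (a *: p) = a *: f p.
Proof. by case: f_morph => f_lin _ _; rewrite -[a *: p]addr0 f_lin Calg_morph0 addr0. Qed.

Lemma Calg_morph_sum (I : Type) (r : seq I) (P : pred I) (F : I -> Pol) :
  f (\sum_(i <- r | P i) F i) = \sum_(i <- r | P i) f (F i).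
Proof. exact: (big_morph f Calg_morphD Calg_morph0). Qed.

Lemma Calg_morphE p : f p = p \mPo [tuple f 'X_i | i < 4].
Proof.
have [_ f_mul f_1] := f_morph.
rewrite {1}[p]mpolyE comp_mpolyEX Calg_morph_sum; apply: eq_bigr => m _.
rewrite Calg_morphZ comp_mpolyX mpolyXE_id (big_morph f f_mul f_1); congr (_ *: _).
apply: eq_bigr => i _; rewrite tnth_mktuple.
by elim: (m i) => [|e IH]; rewrite ?expr0 // !exprS f_mul IH.
Qed.

End CalgMorphism.

Lemma Calg_morph_eq f g : is_Calg_morph f -> is_Calg_morph g ->
  (forall i, f 'X_i = g 'X_i) -> f =1 g.
Proof.
move=> f_morph g_morph fg p; rewrite (Calg_morphE f_morph) (Calg_morphE g_morph).
by have -> : [tuple f 'X_i | i < 4] = [tuple g 'X_i | i < 4] by apply: eq_mktuple.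
Qed.

Lemma comp_mpoly_Calg_morph (t : 4.-tuple Pol) : is_Calg_morph (comp_mpoly t).
Proof. by split=> [a p q|p q|]; rewrite ?rmorphM ?rmorph1 // comp_mpolyD comp_mpolyZ. Qed.

Lemma Calg_morph_comp f g :
  is_Calg_morph f -> is_Calg_morph g -> is_Calg_morph (f \o g).
Proof.
move=> f_morph [g_lin g_mul g_1]; have [f_lin f_mul f_1] := f_morph.
by split=> [a p q|p q|] /=; rewrite ?g_lin ?g_mul ?g_1 ?f_lin ?f_mul.
Qed.

Lemma wdeg0 : wdeg 0%MM = 0%N.
Proof. by rewrite /wdeg big1 // => i _; rewrite mnm0E muln0. Qed.

Lemma wdegD m1 m2 : wdeg (m1 + m2)%MM = (wdeg m1 + wdeg m2)%N.
Proof. by rewrite /wdeg -big_split; apply: eq_bigr => i _; rewrite mnmDE mulnDr. Qed.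

HB.instance Definition _ := isMeasure.Build 4 wdeg wdeg0 wdegD.

Lemma whomogP d p : reflect (whomog d p) (p \is d.-homog for wdeg).
Proof. exact: dhomogP. Qed.

Lemma whomog_mcoeff_eq0 d p m : whomog d p -> wdeg m != d -> p@_m = 0.
Proof. by move=> /whomogP; apply: dhomog_nemf_coeff. Qed.

Lemma wt_gt0 i : (0 < wt i)%N.
Proof. by case: i => [[|[|[|[|i]]]]]. Qed.

Lemma wdegU i : wdeg U_(i) = wt i.
Proof.
rewrite /wdeg (bigD1 i) //= mnm1E eqxx muln1 big1 ?addn0 // => j ji.
by rewrite mnm1E eq_sym (negbTE ji) muln0.
Qed.

Lemma whomogX i : whomog (wt i) 'X_i.
Proof. by move=> m; rewrite msuppX inE => /eqP ->; apply: wdegU. Qed.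

Lemma wdeg_ge (m : 'X_{1..4}) i : (wt i * m i <= wdeg m)%N.
Proof. by rewrite /wdeg (bigD1 i) //= leq_addr. Qed.

Lemma wdeg_eq_wt (m : 'X_{1..4}) k : wdeg m = wt k -> m k != 0%N -> m = U_(k)%MM.
Proof.
rewrite /wdeg (bigD1 k) //= => m_deg mk_neq0.
have [mk1 rest0] : m k = 1%N /\ (\sum_(i < 4 | i != k) wt i * m i = 0)%N.
  move: m_deg mk_neq0 (wt_gt0 k); set S := (\sum_(i < 4 | i != k) _)%N.
  by set a := m k; set b := wt k; move=> *; nia.
apply/mnmP => i; rewrite mnm1E; have [<-|ik] := eqVneq k i; first by rewrite mk1.
have /eqP := rest0; rewrite sum_nat_eq0 => /forall_inP /(_ i).
by rewrite eq_sym ik muln_eq0 (negbTE (lt0n_neq0 (wt_gt0 i))) => /(_ isT) /eqP ->.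
Qed.

Lemma wdeg1_mnm (m : 'X_{1..4}) : wdeg m = 1%N -> m = U_(0%R)%MM \/ m = U_(1%R)%MM.
Proof.
move=> m_deg; have [|i mi] := mnm_neq0_ex (m := m).
  by apply/eqP => m0; rewrite m0 wdeg0 in m_deg.
have wi : wt i = 1%N.
  by have := wdeg_ge m i; have := wt_gt0 i; rewrite m_deg; move: mi; set a := m i; nia.
have := wdeg_eq_wt (etrans m_deg (esym wi)) mi; move: wi.
by case: i mi => [[|[|[|[|?]]]] ?] //= _ _ ->; [left|right]; congr mnm1; apply: val_inj.
Qed.

Lemma whomog1E p : whomog 1 p -> p = p@_U_(0) *: 'X_0 + p@_U_(1) *: 'X_1.
Proof.
move=> p_hom; apply/mpolyP => m; rewrite mcoeffD !mcoeffZ !mcoeffX.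
have U01 : U_(0%R : 'I_4)%MM != U_(1%R)%MM by apply/eqP => /mnmP /(_ 0); rewrite !mnm1E.
have [->|m0] := eqVneq m U_(0%R)%MM; first by rewrite eq_sym (negbTE U01) mulr1 mulr0 addr0.
have [->|m1] := eqVneq m U_(1%R)%MM; first by rewrite mulr1 mulr0 add0r.
rewrite !mulr0 addr0; apply: whomog_mcoeff_eq0 p_hom _.
by apply/eqP => /wdeg1_mnm [] m_eq; [move: m0 | move: m1]; rewrite m_eq eqxx.
Qed.

Lemma whomog_mfree_lt k d p : whomog d p -> (d < wt k)%N -> mfree_of k p.
Proof.
move=> p_hom d_lt m mp; have := wdeg_ge m k; rewrite (p_hom m mp).
by have := wt_gt0 k; set a := m k; set b := wt k; nia.
Qed.

Lemma whomog_mfree k p : whomog (wt k) p -> p@_U_(k) = 0 -> mfree_of k p.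
Proof.
move=> p_hom pk0 m mp; have m_deg := p_hom m mp; apply/eqP; apply: contraTT mp => mk.
by rewrite (wdeg_eq_wt m_deg mk) mcoeff_msupp pk0 eqxx.
Qed.

Definition graded (f : Pol -> Pol) := forall d p, whomog d p -> whomog d (f p).

Lemma graded_comp f g : graded f -> graded g -> graded (f \o g).
Proof. by move=> f_gr g_gr d p /g_gr /f_gr. Qed.

Lemma comp_mpoly_graded (t : 4.-tuple Pol) :
  (forall i, whomog (wt i) (tnth t i)) -> graded (comp_mpoly t).
Proof.
move=> t_hom d p /whomogP p_hom; apply/whomogP.
rewrite comp_mpolyE big_seq rpred_sum // => m mp; rewrite rpredZ // -(dhomog_mf p_hom mp).
apply: (big_rec2 (fun e q => q \is e.-homog for wdeg)) => [|i e q _ q_hom].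
  exact: dhomog1.
by rewrite dhomogM ?dhomogMn //; apply/whomogP.
Qed.

Lemma inH_comp f g : inH f -> inH g -> inH (f \o g).
Proof.
case=> f_morph f_bij f_gr [g_morph g_bij g_gr]; split; first exact: Calg_morph_comp.
  exact: bij_comp.
exact: graded_comp.
Qed.

Lemma elementary_inH k q :
  whomog (wt k) q -> mfree_of k q -> inH (comp_mpoly (elementary k q)).
Proof.
move=> q_hom q_free; split; first exact: comp_mpoly_Calg_morph.
  exact: elementary_bij.
apply: comp_mpoly_graded => i; rewrite tnth_mktuple.
have [->|_] := eqVneq i k; last exact: whomogX.
by apply/whomogP; rewrite rpredD //; apply/whomogP; first exact: whomogX.
Qed.

Lemma graded_coordinate_change z w :
  whomog 2 z -> z@_U_(2) = 1 -> whomog 5 w -> w@_U_(3) = 1 ->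
  exists theta, inH theta /\
    [/\ theta 'X_0 = 'X_0, theta 'X_1 = 'X_1, theta 'X_2 = z & theta 'X_3 = w].
Proof.
move=> z_hom z2 w_hom w3.
have z'_hom : whomog (wt 2) (z - 'X_2).
  by apply/whomogP; rewrite rpredB //; apply/whomogP; [exact: z_hom | exact: whomogX].
have w'_hom : whomog (wt 3) (w - 'X_3).
  by apply/whomogP; rewrite rpredB //; apply/whomogP; [exact: w_hom | exact: whomogX].
have z'_free2 : mfree_of 2 (z - 'X_2).
  by apply: whomog_mfree; rewrite // mcoeffB z2 mcoeffXU eqxx subrr.
have w'_free3 : mfree_of 3 (w - 'X_3).
  by apply: whomog_mfree; rewrite // mcoeffB w3 mcoeffXU eqxx subrr.
have z_free3 : mfree_of 3 z by apply: whomog_mfree_lt z_hom _.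
exists (comp_mpoly (elementary 3 (w - 'X_3)) \o comp_mpoly (elementary 2 (z - 'X_2))).
split; first by apply: inH_comp; apply: elementary_inH.
split=> /=; rewrite !comp_elementaryX //=.
  by rewrite [_ + (z - _)]addrC subrK comp_elementary_free.
by rewrite addrC subrK.
Qed.

Lemma lam_actX l i : lam_act l 'X_i = l ^+ wt i *: 'X_i.
Proof. by rewrite /lam_act comp_mpolyXU; case: i => [[|[|[|[|i]]]] Hi] //=; rewrite expr1. Qed.

Lemma lam_act_morph l : is_Calg_morph (lam_act l).
Proof. exact: comp_mpoly_Calg_morph. Qed.

Lemma lam_act_comp l l' p : lam_act l (lam_act l' p) = lam_act (l * l') p.
Proof.
have morph : is_Calg_morph (fun p => lam_act l (lam_act l' p)).
  exact: Calg_morph_comp (lam_act_morph l) (lam_act_morph l').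
apply: (Calg_morph_eq morph (lam_act_morph (l * l'))) => i.
by rewrite !lam_actX (Calg_morphZ (lam_act_morph l)) lam_actX scalerA exprMn mulrC.
Qed.

Lemma lam_actK l p : l != 0 -> lam_act l^-1 (lam_act l p) = p.
Proof.
move=> l_neq0; rewrite lam_act_comp mulVf //.
have id_morph : is_Calg_morph (fun p => p) by [].
apply: (Calg_morph_eq (lam_act_morph 1) id_morph) => i.
by rewrite lam_actX expr1n scale1r.
Qed.

Section IsolatedWeight.
Variable k : 'I_4.
Hypothesis wt_isolated : forall i, i != k -> wt i != wt k.

(* Each monomial of p contains some x_i with i != k, and f(x_i), homogeneous
   of weight wt i, has neither a constant term nor an x_k term. *)
Lemma graded_mcoeffU_eq0 f p : is_Calg_morph f -> graded f ->
  whomog (wt k) p -> p@_U_(k) = 0 -> (f p)@_U_(k) = 0.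
Proof.
move=> f_morph f_gr p_hom pk0; rewrite (Calg_morphE f_morph) comp_mpolyE raddf_sum /=.
rewrite big_seq big1 // => m mp; rewrite mcoeffZ.
have [|i mi] := mnm_neq0_ex (m := m).
  by apply/eqP => m0; have := wt_gt0 k; rewrite -(p_hom m mp) m0 wdeg0.
have ik : i != k by apply: contraNneq mi => ->; rewrite (whomog_mfree p_hom pk0 mp).
have fXi_hom := f_gr _ _ (@whomogX i).
have mi_gt0 : (0 < m i)%N by rewrite lt0n.
rewrite (bigD1 i) //= tnth_mktuple -(prednK mi_gt0) exprS -mulrA mcoeffMU_eq0 ?mulr0 //.
  by apply: whomog_mcoeff_eq0 fXi_hom _; rewrite wdeg0 eq_sym (lt0n_neq0 (wt_gt0 i)).
by apply: whomog_mcoeff_eq0 fXi_hom _; rewrite wdegU eq_sym wt_isolated.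
Qed.

Definition lin_coef (f : Pol -> Pol) := (f 'X_k)@_U_(k).

Lemma lin_coefM f g : is_Calg_morph f -> graded f -> graded g ->
  lin_coef (f \o g) = lin_coef f * lin_coef g.
Proof.
move=> f_morph f_gr g_gr; set r := g 'X_k - lin_coef g *: 'X_k.
have r_hom : whomog (wt k) r.
  apply/whomogP; rewrite rpredB ?rpredZ //; apply/whomogP; last exact: whomogX.
  exact: g_gr (@whomogX k).
have rk0 : r@_U_(k) = 0 by rewrite mcoeffB mcoeffZ mcoeffXU eqxx mulr1 subrr.
have -> : lin_coef (f \o g) = (f (lin_coef g *: 'X_k + r))@_U_(k) by rewrite addrC subrK.
rewrite (Calg_morphD f_morph) (Calg_morphZ f_morph) mcoeffD mcoeffZ.
by rewrite (graded_mcoeffU_eq0 f_morph f_gr r_hom rk0) addr0 mulrC.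
Qed.

Section FiniteGroup.
Variable Ghat : (Pol -> Pol) -> Prop.
Hypothesis Ghat_fin : finite_subgroup_mod_Cstar Ghat.

Lemma lin_coef_neq0 f : Ghat f -> lin_coef f != 0.
Proof.
have [G_H _ G_inv _ _] := Ghat_fin.
move=> f_G; have [f_morph [f' fK f'K] f_gr] := G_H f f_G.
have [_ _ f'_gr] := G_H f' (G_inv f f' f_G fK f'K).
have : lin_coef (f \o f') = 1 by rewrite /lin_coef /= f'K mcoeffXU eqxx.
rewrite lin_coefM // => /(congr1 (fun c => c != 0)).
by rewrite oner_neq0 mulf_eq0 negb_or => /andP[].
Qed.

Definition normed_image (g : Pol -> Pol) := (lin_coef g)^-1 *: g 'X_k.

Lemma normed_image_hom g : Ghat g -> whomog (wt k) (normed_image g).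
Proof.
have [G_H _ _ _ _] := Ghat_fin; case/G_H => _ _ g_gr.
by apply/whomogP; rewrite rpredZ //; apply/whomogP/g_gr/whomogX.
Qed.

Lemma normed_image_coef g : Ghat g -> (normed_image g)@_U_(k) = 1.
Proof. by move=> g_G; rewrite mcoeffZ mulVf ?lin_coef_neq0. Qed.

Lemma normed_image_comp phi g g' l : Ghat phi -> Ghat g -> Ghat g' ->
  phi \o g = g' \o lam_act l -> phi (normed_image g) = lin_coef phi *: normed_image g'.
Proof.
have [G_H _ _ _ _] := Ghat_fin.
move=> phi_G g_G g'_G e; have [phi_morph _ phi_gr] := G_H _ phi_G.
have [g_morph _ g_gr] := G_H _ g_G; have [g'_morph _ _] := G_H _ g'_G.
have phi_gX : phi (g 'X_k) = l ^+ wt k *: g' 'X_k.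
  by have /= -> := congr1 (fun f => f 'X_k) e; rewrite lam_actX (Calg_morphZ g'_morph).
have coef_eq : lin_coef phi * lin_coef g = l ^+ wt k * lin_coef g'.
  by rewrite -lin_coefM // /lin_coef /= phi_gX mcoeffZ.
rewrite /normed_image (Calg_morphZ phi_morph) phi_gX !scalerA; congr (_ *: _).
have g0 := lin_coef_neq0 g_G; have g'0 := lin_coef_neq0 g'_G.
by rewrite -[lin_coef phi](mulfK g0) coef_eq; field; rewrite g0 g'0.
Qed.

Lemma eigenvector : exists w, [/\ whomog (wt k) w, w@_U_(k) = 1 &
  forall phi, Ghat phi -> exists2 a, a != 0 & phi w = a *: w].
Proof.
have [G_H G_comp _ G_lam [n [g [g_G g_cover]]]] := Ghat_fin.
pose S := undup (codom (fun j => normed_image (g j))).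
have S_img x : x \in S -> exists j, x = normed_image (g j).
  by rewrite mem_undup => /codomP[j ->]; exists j.
have img_S j : normed_image (g j) \in S by rewrite mem_undup codom_f.
have S_neq0 : (size S)%:R != 0 :> C.
  have [j0 _] := g_cover _ (G_lam 1 (oner_neq0 _)).
  by rewrite pnatr_eq0 size_eq0; apply: contraTneq (img_S j0) => ->.
exists ((size S)%:R^-1 *: \sum_(x <- S) x); split.
- apply/whomogP; rewrite rpredZ // big_seq rpred_sum // => x /S_img[j ->].
  exact/whomogP/normed_image_hom.
- rewrite mcoeffZ raddf_sum /= (eq_big_seq (fun=> 1%:R)) => [|x /S_img[j ->]].
    by rewrite -natr_sum sum1_size mulVf.
  exact: normed_image_coef.
move=> phi phi_G; exists (lin_coef phi); first exact: lin_coef_neq0.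
have [phi_morph [phi' phiK _] _] := G_H _ phi_G; set a := lin_coef phi.
have a_neq0 : a != 0 by apply: lin_coef_neq0.
rewrite (Calg_morphZ phi_morph) (Calg_morph_sum phi_morph) scalerA mulrC -scalerA.
congr (_ *: _); rewrite -(sumr_self_inj (f := fun x => a^-1 *: phi x)) ?undup_uniq //.
- by rewrite scaler_sumr; apply: eq_bigr => x _; rewrite scalerA mulfV ?scale1r.
- by move=> x y _ _ /(scalerI (invr_neq0 a_neq0)) /(can_inj phiK).
move=> _ /S_img[j ->]; have [i [l [_ e]]] := g_cover _ (G_comp _ _ phi_G (g_G j)).
by rewrite (normed_image_comp phi_G (g_G j) (g_G i) e) scalerA mulVf ?scale1r.
Qed.

End FiniteGroup.
End IsolatedWeight.

Lemma iter_lam_act Ghat phi : finite_subgroup_mod_Cstar Ghat -> Ghat phi ->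
  exists d l, [/\ (0 < d)%N, l != 0 & forall p, iter d phi p = lam_act l p].
Proof.
case=> G_H G_comp _ _ [n [g [g_G g_cover]]] phi_G.
have iter_G a : Ghat (iter a.+1 phi) by elim: a => [|a IH] //=; apply: G_comp.
have [c c_spec] := fin_all_exists (fun a : 'I_n.+1 => g_cover _ (iter_G a)).
have /injectivePn[a [b ab cab]] : ~~ injectiveb c.
  by apply/injectiveP => /leq_card; rewrite !card_ord ltnn.
wlog lt_ab : a b ab cab / (a < b)%N.
  move=> W; have [|ba|/val_inj eq_ab] := ltngtP a b; first exact: W.
    by apply: (W b a) => //; rewrite eq_sym.
  by rewrite eq_ab eqxx in ab.
have [l1 [l1_neq0 e1]] := c_spec a; have [l2 [l2_neq0 e2]] := c_spec b.
have g_inj : injective (g (c b)) by have [_ /bij_inj] := G_H _ (g_G (c b)).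
exists (b - a)%N, (l1^-1 * l2); split; first by rewrite subn_gt0.
  by rewrite mulf_neq0 ?invr_eq0.
move=> p; rewrite -lam_act_comp -[LHS](lam_actK _ l1_neq0).
apply: (congr1 (lam_act l1^-1)); apply: g_inj.
have E1 : iter a.+1 phi (iter (b - a) phi p) = g (c a) (lam_act l1 (iter (b - a) phi p)).
  exact: (congr1 (fun f => f (iter (b - a) phi p)) e1).
transitivity (iter b.+1 phi p); last exact: (congr1 (fun f => f p) e2).
by rewrite -cab -E1 -iterD addSn subnKC // ltnW.
Qed.

Definition deg1_var (i : 'I_2) : 'I_4 := widen_ord (isT : (2 <= 4)%N) i.

Lemma deg1_var0 : deg1_var 0 = 0. Proof. exact: val_inj. Qed.
Lemma deg1_var1 : deg1_var 1 = 1. Proof. exact: val_inj. Qed.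

Lemma wt_deg1_var j : wt (deg1_var j) = 1%N.
Proof. by case: j => [[|[|j]] Hj]. Qed.

Definition deg1_mx (f : Pol -> Pol) : 'M[C]_2 :=
  \matrix_(i, j) (f 'X_(deg1_var j))@_U_(deg1_var i).

Lemma deg1_mx_col f j : graded f ->
  f 'X_(deg1_var j) = deg1_mx f 0 j *: 'X_0 + deg1_mx f 1 j *: 'X_1.
Proof.
move=> f_gr; have := f_gr _ _ (@whomogX (deg1_var j)).
by rewrite wt_deg1_var => /whomog1E {1}->; rewrite !mxE deg1_var0 deg1_var1.
Qed.

Lemma deg1_mx_comp f g : is_Calg_morph f -> graded g ->
  deg1_mx (f \o g) = deg1_mx f *m deg1_mx g.
Proof.
move=> f_morph g_gr; apply/matrixP => i j.
rewrite mxE [in RHS]mxE /= (deg1_mx_col j g_gr) (Calg_morphD f_morph) !(Calg_morphZ f_morph).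
rewrite mcoeffD !mcoeffZ big_ord_recl big_ord1 !mxE -[in 'X_0]deg1_var0 -[in 'X_1]deg1_var1.
by congr (_ + _); apply: mulrC.
Qed.

Lemma deg1_mx_ext f g : f =1 g -> deg1_mx f = deg1_mx g.
Proof. by move=> fg; apply/matrixP => i j; rewrite !mxE fg. Qed.

Lemma deg1_mx_lam l : deg1_mx (lam_act l) = l%:M.
Proof.
apply/matrixP => i j.
by rewrite !mxE lam_actX wt_deg1_var expr1 mcoeffZ mcoeffXU eq_sym mulr_natr.
Qed.

Lemma deg1_mx_iter f d : is_Calg_morph f -> graded f ->
  deg1_mx (iter d f) = deg1_mx f ^+ d.
Proof.
move=> f_morph f_gr; elim: d => [|d IH].
  by rewrite expr0 -[1]/(1%:M); apply/matrixP => i j; rewrite !mxE mcoeffXU eq_sym.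
have iter_gr : graded (iter d f) by elim: (d) => [|e IHe] // ? ? /IHe /f_gr.
change (deg1_mx (f \o iter d f) = deg1_mx f ^+ d.+1).
by rewrite exprS -IH deg1_mx_comp.
Qed.

Lemma deg1_mx_unit_diag Ghat phi : finite_subgroup_mod_Cstar Ghat -> Ghat phi ->
  deg1_mx phi \in unitmx /\ diagonalizable (deg1_mx phi).
Proof.
move=> Ghat_fin phi_G; have [d [l [d_gt0 l_neq0 phi_d]]] := iter_lam_act Ghat_fin phi_G.
have [G_H _ _ _ _] := Ghat_fin; have [phi_morph _ phi_gr] := G_H _ phi_G.
have A_pow : deg1_mx phi ^+ d = l%:M.
  by rewrite -deg1_mx_iter // (deg1_mx_ext phi_d) deg1_mx_lam.
split; first exact: pow_scalar_unitmx A_pow.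
by apply: pow_scalar_diagonalizable A_pow; rewrite // pnatr_eq0 -lt0n.
Qed.

Lemma wt2_isolated i : i != 2 -> wt i != wt 2.
Proof. by case: i => [[|[|[|[|i]]]] Hi]. Qed.

Lemma wt3_isolated i : i != 3 -> wt i != wt 3.
Proof. by case: i => [[|[|[|[|i]]]] Hi]. Qed.

Unset Implicit Arguments.

Theorem proposition2p3 (Ghat : (Pol -> Pol) -> Prop) :
  finite_subgroup_mod_Cstar Ghat ->
  exists theta : Pol -> Pol, inH theta /\
    forall phi : Pol -> Pol, Ghat phi ->
      exists (alpha beta : C) (A : 'M[C]_2),
        [/\ alpha != 0, beta != 0, A \in unitmx & diagonalizable A] /\
        [/\ phi (theta 'X_3) = alpha *: theta 'X_3,
            phi (theta 'X_2) = beta *: theta 'X_2,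
            phi (theta 'X_0) = A 0 0 *: theta 'X_0 + A 1 0 *: theta 'X_1
          & phi (theta 'X_1) = A 0 1 *: theta 'X_0 + A 1 1 *: theta 'X_1].
Proof.
move=> Ghat_fin.
have [z [z_hom z_coef z_eigen]] := eigenvector wt2_isolated Ghat_fin.
have [w [w_hom w_coef w_eigen]] := eigenvector wt3_isolated Ghat_fin.
have [theta [theta_H [theta0 theta1 theta2 theta3]]] :=
  graded_coordinate_change z_hom z_coef w_hom w_coef.
exists theta; split=> // phi phi_G; rewrite theta0 theta1 theta2 theta3.
have [beta beta_neq0 phi_z] := z_eigen _ phi_G.
have [alpha alpha_neq0 phi_w] := w_eigen _ phi_G.
have [A_unit A_diag] := deg1_mx_unit_diag Ghat_fin phi_G.
have [G_H _ _ _ _] := Ghat_fin; have [_ _ phi_gr] := G_H _ phi_G.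
exists alpha, beta, (deg1_mx phi); split; first by [].
by split; rewrite // -[in LHS](deg1_var0, deg1_var1) deg1_mx_col.
Qed.
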